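(* Let $f^0=0,f^1=0,\dots,f^r=0$ be DAEs in size $n$ such that, for each $k\in[r]$, $f^k$ is obtained from $f^{k-1}$ as $f^k(y,\dot y,\dots,t)=U^k(D_t)\,f^{k-1}(V^k(D_t)y,V^k(D_t)\dot y,\dots,t)$ with $U^k(D_t)=\operatorname{diag}\{D_t^{-p^k_i}\}U^k\operatorname{diag}\{D_t^{p^k_i}\}$, $V^k(D_t)=\operatorname{diag}\{D_t^{-q^k_i}\}V^k\operatorname{diag}\{D_t^{q^k_i}\}$, where $(p^k,q^k)$ is an optimal solution to $(\mathrm{D}_{f^{k-1}})$ and $U^k,V^k\in\mathbb{R}^{n\times n}$ are nonsingular, $U^k$ upper-triangular along $p^k$, $V^k$ upper-triangular along $q^k$, with $\operatorname{trank}(U^kJ_{f^{k-1}}^{p^k,q^k}V^k)<n$; and suppose $f^r=0$ is structurally nonsingular with system Jacobian not identically singular. Define the DAE $f^*=0$ of size $2n$ in the variable $(x(t),z(t))$ by $f^*_i=f^r_i(z,\dot z,\dots,t)$ and $f^*_{n+i}=x_i-\big(V^1(D_t)\cdots V^r(D_t)z\big)_i$ for $i\in[n]$. Then the system Jacobian of $f^*=0$ is nonsingular, i.e. $\det J_{f^*}^{p,q}\not\equiv0$ for an optimal solution $(p,q)$ of $(\mathrm{D}_{f^*})$.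
   Context: A DAE is $f(x,\dot x,\dots,x^{(k)},t)=0$ with $f$ smooth. Its $\sigma$-function is $\sigma_f(i,j)=\max\{l\in\mathbb{Z}_{\ge0}:\partial f_i/\partial x_j^{(l)}\not\equiv0\}$ ($\max\emptyset=-\infty$). $(\mathrm{D}_f)$: minimize $\sum_j q_j-\sum_i p_i$ subject to $q_j-p_i\ge\sigma_f(i,j)$, $p_i,q_j\in\mathbb{Z}_{\ge0}$; $\hat\delta_f$ denotes its optimal value ($-\infty$ if infeasible), and $f=0$ is structurally nonsingular if $\hat\delta_f\ne-\infty$. For optimal $(p,q)$ the system Jacobian is $J_f^{p,q}=\big(\partial f_i/\partial x_j^{(q_j-p_i)}\big)_{ij}$; it is nonsingular if its determinant is not identically zero (this does not depend on the choice of optimal $(p,q)$). $\operatorname{trank}$ is the term-rank (maximum number of not-identically-zero entries with no two in a common row or column). A matrix $U$ is upper-triangular along $p$ if $U_{ij}=0$ whenever $p_i>p_j$. $D_t=\mathrm{d}/\mathrm{d}t$, and the matrices $U^k(D_t),V^k(D_t)$ have entries polynomial in $D_t$. *)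

From HB Require Import structures.
From mathcomp Require Import all_boot all_order all_algebra.
From mathcomp Require Import boolp classical_sets fsbigop reals topology normedtype derive.

Set Implicit Arguments.
Unset Strict Implicit.
Unset Printing Implicit Defensive.
Import Order.TTheory GRing.Theory Num.Theory.
Import numFieldNormedType.Exports.
Local Open Scope ring_scope.

Section DAE.
Variable R : realType.

(** Jet coordinates of n unknowns: [X l j] is the value of x_j^{(l)}. *)
Definition Jet (n : nat) := nat -> 'I_n -> R.

Definition jfun (n : nat) := Jet n -> R -> R.

Definition DAE (n : nat) := 'I_n -> jfun n.

Definition upd n (X : Jet n) (l : nat) (j : 'I_n) (s : R) : Jet n :=
  fun l' j' => if (l' == l) && (j' == j) then s else X l' j'.

Definition pd n (g : jfun n) (l : nat) (j : 'I_n) : jfun n :=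
  fun X t => derive1 (fun s => g (upd X l j s) t) (X l j).

Definition pdt n (g : jfun n) : jfun n :=
  fun X t => derive1 (fun s => g X s) t.

Definition pdir n (g : jfun n) (d : option (nat * 'I_n)) : jfun n :=
  match d with None => pdt g | Some (l, j) => pd g l j end.

Definition derivable_dir n (g : jfun n) (d : option (nat * 'I_n)) X t : Prop :=
  match d with
  | None => derivable (fun s => g X s) t 1
  | Some (l, j) => derivable (fun s => g (upd X l j s) t) (X l j) 1
  end.

Definition iter_pd n (g : jfun n) (ds : seq (option (nat * 'I_n))) : jfun n :=
  foldr (fun d h => pdir h d) g ds.

Definition depends_upto n (K : nat) (g : jfun n) : Prop :=
  forall X Y t, (forall l j, (l <= K)%N -> X l j = Y l j) -> g X t = g Y t.

Definition jcont n (g : jfun n) : Prop :=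
  forall X t (e : R), 0 < e -> exists2 d : R, 0 < d &
    forall Y s, (forall l j, `|Y l j - X l j| < d) -> `|s - t| < d ->
      `|g Y s - g X t| < e.

Definition smooth n (g : jfun n) : Prop :=
  (exists K, depends_upto K g) /\
  forall ds, jcont (iter_pd g ds) /\
             forall d X t, derivable_dir (iter_pd g ds) d X t.

Definition smoothDAE n (f : DAE n) : Prop := forall i, smooth (f i).

Definition nz n (g : jfun n) : Prop := exists X t, g X t != 0.

(** Total time derivative D_t g = dg/dt + sum_{l,j} dg/dx_j^{(l)} x_j^{(l+1)}
    (finitely supported sum over l). *)
Definition Dt n (g : jfun n) : jfun n :=
  fun X t => pdt g X t +
    \sum_(l \in [set: nat]) \sum_(j < n) pd g l j X t * X l.+1 j.

(** Feasibility for (D_f): q_j - p_i >= sigma_f(i,j), i.e. q_j - p_i >= l for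
    every l with d f_i / d x_j^{(l)} not identically zero. *)
Definition feasible n (f : DAE n) (p q : 'I_n -> nat) : Prop :=
  forall i j l, nz (pd (f i) l j) -> (l + p i <= q j)%N.

Definition dobj n (p q : 'I_n -> nat) : int :=
  ((\sum_j q j)%N%:Z - (\sum_i p i)%N%:Z)%R.

Definition optimal n (f : DAE n) (p q : 'I_n -> nat) : Prop :=
  feasible f p q /\
  forall p' q', feasible f p' q' -> (dobj p q <= dobj p' q')%R.

(** Structural nonsingularity: hat delta_f <> -oo, i.e. (D_f) has an
    optimal solution (its optimum is finite). *)
Definition struct_nonsingular n (f : DAE n) : Prop :=
  exists p q, optimal f p q.

Definition sysJ n (f : DAE n) (p q : 'I_n -> nat) (i j : 'I_n) : jfun n :=
  fun X t => if (p i <= q j)%N then pd (f i) (q j - p i) j X t else 0.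

Definition sysJ_det_nz n (f : DAE n) (p q : 'I_n -> nat) : Prop :=
  exists X t, \det (\matrix_(i, j) sysJ f p q i j X t) != 0.

Definition is_matching n (M : 'I_n -> 'I_n -> jfun n) (S : {set 'I_n * 'I_n}) :=
  (forall e, e \in S -> nz (M e.1 e.2)) /\
  {in S &, forall e1 e2, e1.1 = e2.1 \/ e1.2 = e2.2 -> e1 = e2}.

Definition trank n (M : 'I_n -> 'I_n -> jfun n) : nat :=
  \max_(S : {set 'I_n * 'I_n} | `[< is_matching M S >]) #|S|.

Definition UJV n (U V : 'M[R]_n) (J : 'I_n -> 'I_n -> jfun n) :
  'I_n -> 'I_n -> jfun n :=
  fun i j X t => \sum_(a < n) \sum_(b < n) U i a * J a b X t * V b j.

Definition upper_along n (U : 'M[R]_n) (p : 'I_n -> nat) : Prop :=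
  forall i j, (p j < p i)%N -> U i j = 0.

(** (U(D_t) g)_i = sum_j U_ij D_t^{p_j - p_i} g_j,
    U(D_t) = diag{D_t^{-p_i}} U diag{D_t^{p_i}}. *)
Definition applyU n (U : 'M[R]_n) (p : 'I_n -> nat) (g : DAE n) : DAE n :=
  fun i X t => \sum_(j < n)
    (if (p i <= p j)%N then U i j * iter (p j - p i) (@Dt n) (g j) X t else 0).

(** Jet of V(D_t) y from the jet Y of y:
    (V(D_t) y)_i^{(l)} = sum_j V_ij y_j^{(q_j - q_i + l)}. *)
Definition substV n (V : 'M[R]_n) (q : 'I_n -> nat) (Y : Jet n) : Jet n :=
  fun l i => \sum_(j < n)
    (if (q i <= q j)%N then V i j * Y (q j - q i + l)%N j else 0).

Definition transformDAE n (U : 'M[R]_n) (p : 'I_n -> nat)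
    (V : 'M[R]_n) (q : 'I_n -> nat) (f : DAE n) : DAE n :=
  applyU U p (fun i Y t => f i (substV V q Y) t).

(** Jet of V^1(D_t) ... V^r(D_t) z. *)
Definition compV n (r : nat) (V : nat -> 'M[R]_n) (q : nat -> 'I_n -> nat)
    (Z : Jet n) : Jet n :=
  foldr (fun k acc => substV (V k) (q k) acc) Z (iota 1 r).

(** The DAE f^* of size 2n in the variable (x, z): indices lshift = x, rshift = z;
    equations lshift i: f^r_i(z, ...), rshift i: x_i - (V^1(D_t)...V^r(D_t) z)_i. *)
Definition fstar n (r : nat) (fr : DAE n) (V : nat -> 'M[R]_n)
    (q : nat -> 'I_n -> nat) : DAE (n + n) :=
  fun i W t =>
    let Z : Jet n := fun l j => W l (rshift n j) in
    match split i with
    | inl i' => fr i' Z t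
    | inr i' => W 0%N (lshift n i') - compV r V q Z 0%N i'
    end.

End DAE.

From HB Require Import structures.
From mathcomp Require Import all_boot all_order all_algebra.
From mathcomp Require Import boolp classical_sets fsbigop reals topology normedtype derive.
From mathcomp Require Import zify perm.
Set Implicit Arguments.
Unset Strict Implicit.
Unset Printing Implicit Defensive.
Import Order.TTheory GRing.Theory Num.Theory.
Local Open Scope ring_scope.

(* Only f^r matters: the data U^k, V^k enter f^* only through the operator
   V^1(D_t)...V^r(D_t), and the rows x_i - (V^1(D_t)...V^r(D_t) z)_i involve x_i
   at order 0 and z only up to some finite order B.  Shifting an optimal dual
   solution (p, q) of f^r by B on the z-side and putting 0 on the x-side gives a
   feasible dual solution of f^* whose system Jacobian is [0 J; I *], J that of
   f^r, hence with determinant +-det J.  A feasible (p, q) whose system Jacobian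
   is not identically singular is optimal, since a nonzero term of the Leibniz
   expansion bounds every feasible objective from below.  Along such a term the
   orders q_(s i) - p_i agree for all optimal solutions, so the determinant does
   not depend on the optimal (p, q) chosen. *)

Section SystemJacobian.
Variables (R : realType) (m : nat) (f : DAE R m).

Definition sysJmx (p q : 'I_m -> nat) (X : Jet R m) (t : R) : 'M[R]_m :=
  \matrix_(i, j) sysJ f p q i j X t.

Definition sysJ_entry_nz (p q : 'I_m -> nat) (i j : 'I_m) : Prop :=
  (p i <= q j)%N /\ nz (pd (f i) (q j - p i) j).

Lemma sysJ_eq0 p q i j X t : ~ sysJ_entry_nz p q i j -> sysJ f p q i j X t = 0.
Proof.
move=> entry_z; rewrite /sysJ; case: ifP => // le_pq.
apply: contrapT => /eqP pd_nz; apply: entry_z; split => //; by exists X, t.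
Qed.

Lemma sysJmx_perm_prod_eq0 p q (s : 'S_m) X t :
  ~ (forall i, sysJ_entry_nz p q i (s i)) -> \prod_i sysJmx p q X t i (s i) = 0.
Proof.
move=> /existsNP [i entry_z].
by rewrite (bigD1 i) //= mxE sysJ_eq0 // mul0r.
Qed.

Lemma sysJmx_det_nz_perm p q X t : \det (sysJmx p q X t) != 0 ->
  exists s : 'S_m, forall i, sysJ_entry_nz p q i (s i).
Proof.
apply: contraNP => no_perm; apply/eqP; apply: big1 => s _.
by rewrite sysJmx_perm_prod_eq0 ?mulr0 // => supp_s; apply: no_perm; exists s.
Qed.

Section PermutationSupport.
Variables (p q p' q' : 'I_m -> nat) (s : 'S_m).
Hypotheses (supp_s : forall i, sysJ_entry_nz p q i (s i))
           (feas' : feasible f p' q').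

Let order_le i : (q (s i) - p i + p' i <= q' (s i))%N.
Proof. by have [_ pd_nz] := supp_s i; exact: feas' pd_nz. Qed.

Let dobj_gap :
  ((\sum_j q j) + \sum_i p' i = \sum_i (q (s i) - p i + p' i) + \sum_i p i)%N /\
  (\sum_j q' j = \sum_i q' (s i))%N.
Proof.
split; last by rewrite (reindex_inj (@perm_inj _ s)).
rewrite (reindex_inj (@perm_inj _ s)) /= -!big_split /=.
by apply: eq_bigr => i _; have [le_pq _] := supp_s i; lia.
Qed.

Lemma dobj_le_of_perm_support : dobj p q <= dobj p' q'.
Proof.
have sum_le : (\sum_i (q (s i) - p i + p' i) <= \sum_i q' (s i))%N.
  by apply: leq_sum => i _; exact: order_le.
have [gap_pq gap_pq'] := dobj_gap; rewrite /dobj; lia.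
Qed.

Lemma orders_eq_of_perm_support : dobj p q = dobj p' q' ->
  forall i, (p' i <= q' (s i))%N /\ (q (s i) - p i = q' (s i) - p' i)%N.
Proof.
move=> dobj_eq.
have sum_eq : (\sum_i (q (s i) - p i + p' i) = \sum_i q' (s i))%N.
  by have [gap_pq gap_pq'] := dobj_gap; move: dobj_eq; rewrite /dobj; lia.
have order_leif i : true -> (q (s i) - p i + p' i <= q' (s i)
                             ?= iff (q (s i) - p i + p' i == q' (s i)))%N.
  by move=> _; apply: leqif_eq; exact: order_le.
have [_] := leqif_sum order_leif; rewrite sum_eq eqxx => /esym/forall_inP all_eq i.
by have /eqP := all_eq i isT; have := order_le i; lia.
Qed.

End PermutationSupport.

Lemma optimal_of_sysJ_det_nz p q :
  feasible f p q -> sysJ_det_nz f p q -> optimal f p q.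
Proof.
move=> feas [X [t det_nz]]; have [s supp_s] := sysJmx_det_nz_perm det_nz.
by split=> // p' q'; exact: dobj_le_of_perm_support.
Qed.

Lemma sysJmx_perm_prod_optimal p q p' q' (s : 'S_m) X t :
  optimal f p q -> optimal f p' q' -> (forall i, sysJ_entry_nz p q i (s i)) ->
  \prod_i sysJmx p q X t i (s i) = \prod_i sysJmx p' q' X t i (s i).
Proof.
move=> [feas opt] [feas' opt'] supp_s.
have dobj_eq : dobj p q = dobj p' q' by apply/eqP; rewrite eq_le opt // opt'.
have orders_eq := orders_eq_of_perm_support supp_s feas' dobj_eq.
apply: eq_bigr => i _; rewrite !mxE /sysJ.
by have [-> _] := supp_s i; have [-> ->] := orders_eq i.
Qed.

Lemma det_sysJmx_optimal p q p' q' X t : optimal f p q -> optimal f p' q' ->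
  \det (sysJmx p q X t) = \det (sysJmx p' q' X t).
Proof.
move=> opt opt'; apply: eq_bigr => s _; congr (_ * _).
have [supp|nsupp] := pselect (forall i, sysJ_entry_nz p q i (s i)).
  exact: sysJmx_perm_prod_optimal.
have [supp'|nsupp'] := pselect (forall i, sysJ_entry_nz p' q' i (s i)).
  by rewrite (sysJmx_perm_prod_optimal _ _ opt' opt supp').
by rewrite !sysJmx_perm_prod_eq0.
Qed.

End SystemJacobian.

Lemma pd_eq0_of_const (R : realType) m (g : jfun R m) l j X t :
  (forall s, g (upd X l j s) t = g X t) -> pd g l j X t = 0.
Proof.
move=> g_const; rewrite /pd.
have -> : (fun s => g (upd X l j s) t) = functions.cst (g X t) by apply/funext => s.
by rewrite derive1E derive_cst.
Qed.

Lemma det_block_mx0_1_neq0 (R : comUnitRingType) n (A D : 'M[R]_n) :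
  \det A != 0 -> \det (block_mx 0 A 1%:M D) != 0.
Proof.
set S := block_mx (0 : 'M[R]_n) 1%:M 1%:M 0.
have -> : block_mx 0 A 1%:M D = block_mx A 0 D 1%:M *m S.
  by rewrite mulmx_block ?mulmx0 ?mulmx1 ?mul0mx ?mul1mx ?addr0 ?add0r.
have SS1 : S *m S = 1%:M.
  by rewrite mulmx_block ?mulmx0 ?mulmx1 ?addr0 ?add0r -scalar_mx_block.
have detS_unit : \det S \is a GRing.unit.
  by rewrite -unitmxE; exact: (mulmx1_unit SS1).1.
by rewrite det_mulmx det_lblock det1 mulr1 mulIr_eq0 //; exact: mulIr.
Qed.

Section FstarJacobian.
Variables (R : realType) (n r : nat) (fr : DAE R n) (V : nat -> 'M[R]_n)
  (q : nat -> 'I_n -> nat).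

Let fs := fstar r fr V q.

Definition zjet (W : Jet R (n + n)) : Jet R n := fun l j => W l (rshift n j).

Definition zjet_embed (Z : Jet R n) : Jet R (n + n) :=
  fun l k => if split k is inr j then Z l j else 0.

Lemma zjet_embedK Z : zjet (zjet_embed Z) = Z.
Proof.
by apply/funext => l; apply/funext => j; rewrite /zjet /zjet_embed (unsplitK (inr j)).
Qed.

Lemma zjet_upd_rshift W l j s : zjet (upd W l (rshift n j) s) = upd (zjet W) l j s.
Proof. by apply/funext => l'; apply/funext => j'; rewrite /zjet /upd eq_rshift. Qed.

Lemma zjet_upd_lshift W l j s : zjet (upd W l (lshift n j) s) = zjet W.
Proof. by apply/funext => l'; apply/funext => j'; rewrite /zjet /upd eq_rlshift andbF. Qed.

Lemma fstar_lshift i W t : fs (lshift n i) W t = fr i (zjet W) t.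
Proof. by rewrite /fs /fstar (unsplitK (inl i)). Qed.

Lemma fstar_rshift i W t :
  fs (rshift n i) W t = W 0%N (lshift n i) - compV r V q (zjet W) 0%N i.
Proof. by rewrite /fs /fstar (unsplitK (inr i)). Qed.

Lemma pd_fstar_lshift_rshift i l j W t :
  pd (fs (lshift n i)) l (rshift n j) W t = pd (fr i) l j (zjet W) t.
Proof.
rewrite /pd (_ : (fun s => _) = fun s => fr i (upd (zjet W) l j s) t) //.
by apply/funext => s; rewrite fstar_lshift zjet_upd_rshift.
Qed.

Lemma foldr_substV_local (ks : seq nat) : exists B, forall (Z Z' : Jet R n) L,
  (forall l j, (l <= L + B)%N -> Z l j = Z' l j) ->
  forall l i, (l <= L)%N ->
  foldr (fun k acc => substV (V k) (q k) acc) Z ks l i =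
  foldr (fun k acc => substV (V k) (q k) acc) Z' ks l i.
Proof.
elim: ks => [|k ks [B IH]].
  by exists 0%N => Z Z' L eqZ l i le_lL /=; apply: eqZ; rewrite addn0.
exists (B + \max_j q k j)%N => Z Z' L eqZ l i le_lL /=.
apply: eq_bigr => j _; case: ifP => // _; congr (_ * _).
apply: (IH _ _ (L + \max_j q k j)%N); first by move=> l' j' ?; apply: eqZ; lia.
have := @leq_bigmax _ (fun j => q k j) j; lia.
Qed.

Lemma compV_local : exists B, forall Z Z' : Jet R n,
  (forall l j, (l <= B)%N -> Z l j = Z' l j) ->
  forall i, compV r V q Z 0%N i = compV r V q Z' 0%N i.
Proof.
have [B local] := foldr_substV_local (iota 1 r).
by exists B => Z Z' eqZ i; apply: (local _ _ 0%N).
Qed.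

Variables (B : nat) (pr qr : 'I_n -> nat).
Hypothesis compV_localB : forall Z Z' : Jet R n,
  (forall l j, (l <= B)%N -> Z l j = Z' l j) ->
  forall i, compV r V q Z 0%N i = compV r V q Z' 0%N i.

Definition fstar_p (i : 'I_(n + n)) : nat :=
  if split i is inl i' then (pr i' + B)%N else 0%N.

Definition fstar_q (j : 'I_(n + n)) : nat :=
  if split j is inr j' then (qr j' + B)%N else 0%N.

Lemma fstar_feasible : feasible fr pr qr -> feasible fs fstar_p fstar_q.
Proof.
move=> feas i j l; rewrite -(splitK i) -(splitK j) /fstar_p /fstar_q.
case: (split i) => i'; case: (split j) => j' [W [t pd_nz]];
  rewrite /= ?(unsplitK (inl _)) ?(unsplitK (inr _)); move: pd_nz.
- by rewrite pd_eq0_of_const ?eqxx // => s; rewrite !fstar_lshift zjet_upd_lshift.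
- rewrite pd_fstar_lshift_rshift => pd_nz.
  have pd_r_nz : nz (pd (fr i') l j') by exists (zjet W), t.
  by have := feas _ _ _ pd_r_nz; lia.
- case: l => [|l] //; rewrite pd_eq0_of_const ?eqxx // => s.
  by rewrite !fstar_rshift zjet_upd_lshift /upd.
- case: (leqP l B) => [le_lB|lt_Bl]; first by lia.
  rewrite pd_eq0_of_const ?eqxx // => s.
  rewrite !fstar_rshift zjet_upd_rshift {1}/upd eq_lrshift andbF.
  congr (_ - _); apply: compV_localB => l' k le_l'B; rewrite /upd.
  by have /negbTE -> : l' != l by apply/eqP; lia.
Qed.

Lemma sysJmx_fstar_block Z t :
  sysJmx fs fstar_p fstar_q (zjet_embed Z) t =
  block_mx 0 (sysJmx fr pr qr Z t) 1%:M
           (drsubmx (sysJmx fs fstar_p fstar_q (zjet_embed Z) t)).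
Proof.
rewrite -[LHS]submxK; congr block_mx; apply/matrixP => i j;
  rewrite !mxE /sysJ /fstar_p /fstar_q ?(unsplitK (inl _)) ?(unsplitK (inr _)).
- case: ifP => // _; rewrite pd_eq0_of_const // => s.
  by rewrite !fstar_lshift zjet_upd_lshift.
- by rewrite leq_add2r subnDr pd_fstar_lshift_rshift zjet_embedK.
- rewrite leqnn subnn; have [<-|neq_ij] := eqVneq i j; last first.
    rewrite pd_eq0_of_const // => s.
    by rewrite !fstar_rshift zjet_upd_lshift /upd eq_lshift (negbTE neq_ij) andbF.
  rewrite /pd.
  have -> : (fun s => fs (rshift n i) (upd (zjet_embed Z) 0 (lshift n i) s) t) =
            shift (- compV r V q Z 0%N i).
    by apply/funext => s; rewrite fstar_rshift zjet_upd_lshift zjet_embedK /upd !eqxx.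
  by rewrite derive1E (is_derive_shift _ _ _).(derive_val).
Qed.

End FstarJacobian.

Theorem theorem5 (R : realType) (n r : nat) (f : nat -> DAE R n)
    (U V : nat -> 'M[R]_n) (p q : nat -> 'I_n -> nat) :
  (forall k, (k <= r)%N -> smoothDAE (f k)) ->
  (forall k, (1 <= k <= r)%N ->
     [/\ optimal (f k.-1) (p k) (q k),
         \det (U k) != 0 /\ \det (V k) != 0,
         upper_along (U k) (p k) /\ upper_along (V k) (q k),
         (trank (UJV (U k) (V k) (sysJ (f k.-1) (p k) (q k))) < n)%N &
         f k = transformDAE (U k) (p k) (V k) (q k) (f k.-1)]) ->
  struct_nonsingular (f r) ->
  (exists pr qr, optimal (f r) pr qr /\ sysJ_det_nz (f r) pr qr) ->
  let fs := fstar r (f r) V q in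
  struct_nonsingular fs /\
  forall ps qs, optimal fs ps qs -> sysJ_det_nz fs ps qs.
Proof.
move=> _ _ _ [pr [qr [[feas_r _] [Z [t det_nz]]]]] fs.
have [B compV_localB] := compV_local r V q.
pose ps := fstar_p B pr; pose qs := fstar_q B qr.
have det_fs_nz : \det (sysJmx fs ps qs (zjet_embed Z) t) != 0.
  rewrite sysJmx_fstar_block; exact: det_block_mx0_1_neq0.
have opt_fs : optimal fs ps qs.
  apply: optimal_of_sysJ_det_nz; last by exists (zjet_embed Z), t.
  exact: fstar_feasible.
split=> [|ps' qs' opt']; first by exists ps, qs.
by exists (zjet_embed Z), t; rewrite (det_sysJmx_optimal _ _ opt' opt_fs).
Qed.
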